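(* For an integer $p\ge1$ let $F_p(s)=-\sum_{j=1}^\infty\ln(1-e^{j^ps})$ for $s<0$. Then for every pair of integers $p\ge1$ and $m\ge0$, $$F_p^{(m)}(-s)\sim\frac1p\,\zeta(1+1/p)\,\Gamma(m+1/p)\,\frac{1}{s^{m+1/p}},\quad\text{as } s\downarrow0.$$
   Context: $F_p$ is the fulcrum $s\mapsto\ln G_p(e^s)$ of $G_p(z)=\prod_{j\ge1}(1-z^{j^p})^{-1}$, the generating function of partitions into $p$-th powers. $F_p^{(m)}$ denotes the $m$-th derivative ($F_p^{(0)}=F_p$). $\alpha(s)\sim\beta(s)$ means $\alpha(s)/\beta(s)\to1$. $\zeta$ is the Riemann zeta function and $\Gamma$ the Gamma function. *)

From Stdlib Require Import Reals.
From Coquelicot Require Import Coquelicot.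
Open Scope R_scope.

Definition Fp (p : nat) (s : R) : R :=
  - Series (fun j : nat => ln (1 - exp (INR (S j) ^ p * s))).

Definition zeta (x : R) : R :=
  Series (fun n : nat => / Rpower (INR (S n)) x).

Definition Gamma (x : R) : R :=
  RInt_gen (fun t => Rpower t (x - 1) * exp (- t))
           (at_right 0) (Rbar_locally p_infty).

From Stdlib Require Import Reals Lra Lia.
From Coquelicot Require Import Coquelicot.
Open Scope R_scope.

(* Since [-ln (1 - e^y) = sum_k e^(k y) / k], the [m]-th derivative of [F_p] at [-s]
   is, termwise, the double series [sum_(j,k) j^(p m) k^(m-1) e^(-k j^p s)].  Summing
   over [j] first with mesh [h = (k s)^(1/p)] turns the inner series into
   [h^(-p m - 1)] times a Riemann sum [h sum_j g (j h)] of [g y = y^(p m) e^(-y^p)],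
   so that [s^(m + 1/p) F_p^(m)(-s) = sum_k k^(-1-1/p) R(h_k(s))].  Each Riemann sum
   tends to [int_0^oo g = Gamma(m + 1/p) / p] (substitute [t = y^p]); since [g] is
   unimodal the sums are uniformly bounded, and Tannery's theorem yields the limit
   [zeta(1 + 1/p) Gamma(m + 1/p) / p]. *)

Lemma sum_n_nonneg (a : nat -> R) N : (forall n, 0 <= a n) -> 0 <= sum_n a N.
Proof.
  intros Ha; induction N as [|N IH]; [rewrite sum_O; auto|].
  rewrite sum_Sn; unfold plus; simpl; specialize (Ha (S N)); lra.
Qed.

Lemma sum_n_le (a b : nat -> R) N :
  (forall k, (k <= N)%nat -> a k <= b k) -> sum_n a N <= sum_n b N.
Proof.
  induction N as [|N IH]; intros Hab; [rewrite !sum_O; apply Hab; lia|].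
  rewrite !sum_Sn; unfold plus; simpl.
  assert (a (S N) <= b (S N)) by (apply Hab; lia).
  assert (sum_n a N <= sum_n b N) by (apply IH; intros; apply Hab; lia).
  lra.
Qed.

Lemma sum_n_incr (a : nat -> R) N M :
  (forall n, 0 <= a n) -> (N <= M)%nat -> sum_n a N <= sum_n a M.
Proof.
  intros Ha HNM; induction HNM as [|M _ IH]; [lra|].
  rewrite sum_Sn; unfold plus; simpl; specialize (Ha (S M)); lra.
Qed.

Lemma sum_n_le_Series (a : nat -> R) N :
  (forall n, 0 <= a n) -> ex_series a -> sum_n a N <= Series a.
Proof.
  intros Ha Hex; apply (is_lim_seq_incr_compare (sum_n a)); [apply Series_correct, Hex|].
  intros n; rewrite sum_Sn; unfold plus; simpl; specialize (Ha (S n)); lra.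
Qed.

Lemma Series_ge_term (a : nat -> R) N :
  (forall n, 0 <= a n) -> ex_series a -> a N <= Series a.
Proof.
  intros Ha Hex; eapply Rle_trans; [|apply (sum_n_le_Series a N Ha Hex)].
  destruct N as [|N]; [rewrite sum_O; lra|].
  rewrite sum_Sn; unfold plus; simpl; pose proof (sum_n_nonneg a N Ha); lra.
Qed.

Lemma Series_nonneg (a : nat -> R) : (forall n, 0 <= a n) -> ex_series a -> 0 <= Series a.
Proof. intros Ha Hex; eapply Rle_trans; [|apply (Series_ge_term a 0 Ha Hex)]; auto. Qed.

Lemma ex_series_bounded_nonneg (a : nat -> R) B :
  (forall n, 0 <= a n) -> (forall N, sum_n a N <= B) -> ex_series a /\ Series a <= B.
Proof.
  intros Ha HB.
  assert (Hlim : ex_finite_lim_seq (sum_n a)).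
  { apply (ex_finite_lim_seq_incr _ B); auto.
    intros n; rewrite sum_Sn; unfold plus; simpl; specialize (Ha (S n)); lra. }
  assert (Hex : ex_series a) by (exists (real (Lim_seq (sum_n a))); exact (Lim_seq_correct' _ Hlim)).
  split; [exact Hex|].
  pose proof (is_lim_seq_le (sum_n a) (fun _ => B) (Series a) B HB
                (Series_correct _ Hex) (is_lim_seq_const B)) as HS.
  simpl in HS; lra.
Qed.

Lemma ex_series_le_nonneg (a b : nat -> R) :
  (forall n, 0 <= a n <= b n) -> ex_series b -> ex_series a.
Proof.
  intros Hab Hb; apply (ex_series_le a b); auto.
  intros n; change (norm (a n)) with (Rabs (a n)); rewrite Rabs_pos_eq; apply Hab.
Qed.

Lemma ex_series_scal_R (c : R) (a : nat -> R) : ex_series a -> ex_series (fun n => c * a n).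
Proof. exact (ex_series_scal_l c a). Qed.

Lemma ex_series_minus_R (a b : nat -> R) :
  ex_series a -> ex_series b -> ex_series (fun n => a n - b n).
Proof. exact (ex_series_minus a b). Qed.

Lemma sum_n_Series_comm (u : nat -> nat -> R) K :
  (forall k, ex_series (fun j => u j k)) ->
  ex_series (fun j => sum_n (u j) K) /\
  sum_n (fun k => Series (fun j => u j k)) K = Series (fun j => sum_n (u j) K).
Proof.
  intros Hu; induction K as [|K [Hex Heq]].
  - rewrite sum_O; split.
    + eapply ex_series_ext; [|apply (Hu 0%nat)]; intros; rewrite sum_O; auto.
    + apply Series_ext; intros; rewrite sum_O; auto.
  - split.
    + eapply ex_series_ext; [|apply (ex_series_plus _ _ Hex (Hu (S K)))].
      intros n; rewrite sum_Sn; auto.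
    + rewrite sum_Sn, Heq; unfold plus; simpl.
      rewrite <- Series_plus; auto; apply Series_ext; intros n; rewrite sum_Sn; auto.
Qed.

Lemma Series_swap_le (u : nat -> nat -> R) :
  (forall j k, 0 <= u j k) ->
  (forall k, ex_series (fun j => u j k)) -> (forall j, ex_series (u j)) ->
  ex_series (fun j => Series (u j)) ->
  ex_series (fun k => Series (fun j => u j k)) /\
  Series (fun k => Series (fun j => u j k)) <= Series (fun j => Series (u j)).
Proof.
  intros Hu Hcol Hrow Hsum; apply ex_series_bounded_nonneg.
  - intros k; apply Series_nonneg; auto.
  - intros K; destruct (sum_n_Series_comm u K Hcol) as [_ ->].
    apply Series_le; auto; intros n; split.
    + apply sum_n_nonneg; auto.
    + apply sum_n_le_Series; auto.
Qed.

Lemma Series_swap_nonneg (u : nat -> nat -> R) :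
  (forall j k, 0 <= u j k) ->
  (forall j, ex_series (u j)) -> ex_series (fun j => Series (u j)) ->
  Series (fun k => Series (fun j => u j k)) = Series (fun j => Series (u j)).
Proof.
  intros Hu Hrow Hsum.
  assert (Hcol : forall k, ex_series (fun j => u j k)).
  { intros k; apply (ex_series_le_nonneg _ (fun j => Series (u j))); auto.
    intros j; split; auto; apply Series_ge_term; auto. }
  destruct (Series_swap_le u Hu Hcol Hrow Hsum) as [Hex Hle].
  destruct (Series_swap_le (fun k j => u j k) (fun k j => Hu j k) Hrow Hcol Hex) as [_ Hge].
  change (Series (fun j => Series (fun k => u j k))) with (Series (fun j => Series (u j))) in Hge.
  lra.
Qed.

Lemma taylor_remainder_bound (f f' f'' : R -> R) t d M :
  (forall x, Rabs (x - t) <= d ->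
     is_derive f x (f' x) /\ is_derive f' x (f'' x) /\ Rabs (f'' x) <= M) ->
  forall h, Rabs h <= d -> Rabs (f (t + h) - f t - h * f' t) <= h * h * M.
Proof.
  intros Hf h Hh.
  set (g := fun x => f x - x * f' t).
  assert (Hg : forall c, Rabs (c - t) <= d -> is_derive g c (f' c - f' t)).
  { intros c Hc; unfold g; destruct (Hf c Hc) as [Df _].
    replace (f' c - f' t) with (f' c - 1 * f' t) by ring.
    apply (is_derive_minus f (fun x => x * f' t)); auto; auto_derive; auto; ring. }
  replace (t + h - t) with h in * by ring.
  destruct (MVT_cor4 g (fun c => f' c - f' t) t d Hg (t + h)) as [c [Hgc Hct]];
    [replace (t + h - t) with h by ring; auto|].
  replace (t + h - t) with h in Hct by ring.
  assert (Hf' : forall x, Rabs (x - t) <= d -> is_derive f' x (f'' x)) by (intros; apply Hf; auto).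
  destruct (MVT_cor4 f' f'' t d Hf' c ltac:(lra)) as [e [Hf'e Het]].
  destruct (Hf e ltac:(lra)) as [_ [_ HM]].
  unfold g in Hgc.
  replace (f (t + h) - f t - h * f' t) with ((f' c - f' t) * h) by lra.
  rewrite Hf'e, !Rabs_mult.
  assert (0 <= M) by (eapply Rle_trans; [apply Rabs_pos|exact HM]).
  assert (Hhh : Rabs h * Rabs h = h * h) by (rewrite <- Rabs_mult; apply Rabs_pos_eq; nra).
  replace (h * h * M) with (M * Rabs h * Rabs h) by (rewrite Rmult_assoc, Hhh; ring).
  apply Rmult_le_compat_r; [apply Rabs_pos|].
  apply Rmult_le_compat; try apply Rabs_pos; lra.
Qed.

Lemma Series_taylor_remainder_le (f f' f'' : nat -> R -> R) (M : nat -> R) t d h :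
  (forall i x, Rabs (x - t) <= d ->
     is_derive (f i) x (f' i x) /\ is_derive (f' i) x (f'' i x) /\ Rabs (f'' i x) <= M i) ->
  ex_series M -> ex_series (fun i => f i (t + h)) -> ex_series (fun i => f i t) ->
  ex_series (fun i => f' i t) -> Rabs h <= d ->
  Rabs (Series (fun i => f i (t + h)) - Series (fun i => f i t) - h * Series (fun i => f' i t))
  <= h * h * Series M.
Proof.
  intros Hf HM Exh Ex0 Ex' Hh.
  set (e := fun i => f i (t + h) - f i t - h * f' i t).
  assert (He : forall i, Rabs (e i) <= h * h * M i).
  { intros i; apply (taylor_remainder_bound (f i) (f' i) (f'' i) t d (M i)); auto. }
  assert (ExM : ex_series (fun i => h * h * M i)) by exact (ex_series_scal_R (h * h) M HM).
  assert (Exe : ex_series (fun i => Rabs (e i))).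
  { apply (ex_series_le_nonneg _ _ (fun i => conj (Rabs_pos (e i)) (He i)) ExM). }
  assert (Eq : Series e = Series (fun i => f i (t + h)) - Series (fun i => f i t)
                          - h * Series (fun i => f' i t)).
  { rewrite <- Series_scal_l; unfold e; rewrite Series_minus, Series_minus; auto.
    - apply ex_series_minus_R; auto.
    - apply (ex_series_scal_R h _ Ex'). }
  rewrite <- Eq; eapply Rle_trans; [apply Series_Rabs; auto|]; rewrite <- Series_scal_l.
  apply Series_le; auto; intros i; split; [apply Rabs_pos|apply He].
Qed.

Lemma is_derive_Series (f f' f'' : nat -> R -> R) (M : nat -> R) t d : 0 < d ->
  (forall i x, Rabs (x - t) <= d ->
     is_derive (f i) x (f' i x) /\ is_derive (f' i) x (f'' i x) /\ Rabs (f'' i x) <= M i) ->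
  ex_series M -> (forall x, Rabs (x - t) <= d -> ex_series (fun i => f i x)) ->
  ex_series (fun i => f' i t) ->
  is_derive (fun x => Series (fun i => f i x)) t (Series (fun i => f' i t)).
Proof.
  intros Hd Hf HM Hex Hex'.
  assert (M0 : forall i, 0 <= M i).
  { intros i; destruct (Hf i t) as [_ [_ Hb]]; [rewrite Rminus_eq_0, Rabs_R0; lra|].
    eapply Rle_trans; [apply Rabs_pos|exact Hb]. }
  set (SM := Series M).
  assert (SM0 : 0 <= SM) by (apply Series_nonneg; auto).
  apply is_derive_Reals; intros eps Heps.
  assert (Hpos : 0 < Rmin d (eps / (SM + 1))) by (apply Rmin_pos; [|apply Rdiv_lt_0_compat]; lra).
  exists (mkposreal _ Hpos); intros h Hh0 Hh; simpl in Hh.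
  assert (Hhd : Rabs h <= d) by (pose proof (Rmin_l d (eps / (SM + 1))); lra).
  assert (Hhe : Rabs h < eps / (SM + 1)) by (pose proof (Rmin_r d (eps / (SM + 1))); lra).
  pose proof (Series_taylor_remainder_le f f' f'' M t d h Hf HM
                (Hex (t + h) ltac:(replace (t + h - t) with h by ring; auto))
                (Hex t ltac:(rewrite Rminus_eq_0, Rabs_R0; lra)) Hex' Hhd) as Hse.
  fold SM in Hse.
  assert (Hh' : 0 < Rabs h) by (apply Rabs_pos_lt; auto).
  replace ((Series (fun i => f i (t + h)) - Series (fun i => f i t)) / h
           - Series (fun i => f' i t))
    with ((Series (fun i => f i (t + h)) - Series (fun i => f i t)
           - h * Series (fun i => f' i t)) / h) by (field; auto).
  unfold Rdiv; rewrite Rabs_mult, Rabs_inv.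
  apply (Rmult_le_compat_r (/ Rabs h)) in Hse; [|left; apply Rinv_0_lt_compat; auto].
  eapply Rle_lt_trans; [exact Hse|].
  replace (h * h * SM * / Rabs h) with (Rabs h * SM)
    by (rewrite <- (Rabs_pos_eq (h * h)) by nra; rewrite Rabs_mult; field; lra).
  apply (Rmult_lt_compat_r (SM + 1)) in Hhe; [|lra].
  replace (eps / (SM + 1) * (SM + 1)) with eps in Hhe by (field; lra).
  nra.
Qed.

Lemma filter_forall_le {T} {F : (T -> Prop) -> Prop} {FF : Filter F}
  (P : nat -> T -> Prop) K :
  (forall k, F (P k)) -> F (fun s => forall k, (k <= K)%nat -> P k s).
Proof.
  intros HP; induction K as [|K IH].
  - eapply filter_imp; [|exact (HP 0%nat)].
    intros s Hs k Hk; replace k with 0%nat by lia; exact Hs.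
  - eapply filter_imp; [|exact (filter_and _ _ IH (HP (S K)))].
    intros s [Hle HS] k Hk; destruct (Nat.eq_dec k (S K)) as [->|]; auto; apply Hle; lia.
Qed.

Section WeightedSeries.

Variables (w d : nat -> R) (K : nat) (eta B : R).
Hypothesis w_nonneg : forall k, 0 <= w k.
Hypothesis ex_w : ex_series w.
Hypothesis d_head : forall k, (k <= K)%nat -> Rabs (d k) <= eta.
Hypothesis d_bound : forall k, Rabs (d k) <= B.

Lemma ex_series_weighted_abs : ex_series (fun k => w k * Rabs (d k)).
Proof.
  apply (ex_series_le_nonneg _ (fun k => B * w k)); [|apply ex_series_scal_R; auto].
  intros k; split; [apply Rmult_le_pos; auto; apply Rabs_pos|].
  rewrite Rmult_comm; apply Rmult_le_compat_r; auto.
Qed.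

Lemma sum_n_weighted_abs_le N :
  sum_n (fun k => w k * Rabs (d k)) N <= eta * Series w + B * (Series w - sum_n w K).
Proof.
  assert (HwN : forall N, sum_n w N <= Series w) by (intros; apply sum_n_le_Series; auto).
  assert (HB : 0 <= B) by (eapply Rle_trans; [apply Rabs_pos|apply (d_bound 0%nat)]).
  assert (Hhead : sum_n (fun k => w k * Rabs (d k)) K <= eta * Series w).
  { apply Rle_trans with (sum_n (fun k => eta * w k) K).
    - apply sum_n_le; intros k Hk; rewrite Rmult_comm; apply Rmult_le_compat_r; auto.
    - change (sum_n (fun k => mult eta (w k)) K <= eta * Series w).
      rewrite (sum_n_mult_l eta w K); apply Rmult_le_compat_l; auto.
      eapply Rle_trans; [apply Rabs_pos|apply (d_head 0%nat); lia]. }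
  assert (Htail : forall N, (K <= N)%nat -> sum_n (fun k => w k * Rabs (d k)) N
            - sum_n (fun k => w k * Rabs (d k)) K <= B * (sum_n w N - sum_n w K)).
  { intros M HKM; induction HKM as [|M _ IH]; [lra|].
    rewrite !sum_Sn; unfold plus; simpl.
    specialize (w_nonneg (S M)); specialize (d_bound (S M)); nra. }
  assert (0 <= B * (Series w - sum_n w K)) by (apply Rmult_le_pos; auto; specialize (HwN K); lra).
  destruct (Compare_dec.le_lt_dec K N) as [HKN|HNK].
  - specialize (Htail N HKN); specialize (HwN N).
    assert (B * (sum_n w N - sum_n w K) <= B * (Series w - sum_n w K))
      by (apply Rmult_le_compat_l; lra).
    lra.
  - assert (sum_n (fun k => w k * Rabs (d k)) N <= sum_n (fun k => w k * Rabs (d k)) K).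
    { apply sum_n_incr; [|lia]; intros; apply Rmult_le_pos; auto; apply Rabs_pos. }
    lra.
Qed.

Lemma Series_weighted_le :
  Rabs (Series (fun k => w k * d k)) <= eta * Series w + B * (Series w - sum_n w K).
Proof.
  assert (Habs : forall k, Rabs (w k * d k) = w k * Rabs (d k))
    by (intros k; rewrite Rabs_mult, Rabs_pos_eq; auto).
  eapply Rle_trans; [apply Series_Rabs|].
  - eapply ex_series_ext; [|exact ex_series_weighted_abs]; intros k; rewrite Habs; reflexivity.
  - cbv beta; rewrite (Series_ext _ _ Habs).
    apply (ex_series_bounded_nonneg (fun k => w k * Rabs (d k))); [|apply sum_n_weighted_abs_le].
    intros; apply Rmult_le_pos; auto; apply Rabs_pos.
Qed.

End WeightedSeries.

Lemma Series_weighted_dev_le (w r : nat -> R) L K eta B :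
  (forall k, 0 <= w k) -> ex_series w ->
  (forall k, (k <= K)%nat -> Rabs (r k - L) <= eta) -> (forall k, Rabs (r k - L) <= B) ->
  Rabs (Series (fun k => w k * r k) - Series w * L)
  <= eta * Series w + B * (Series w - sum_n w K).
Proof.
  intros Hw Hex Hhead Hall.
  assert (Hexd : ex_series (fun k => w k * (r k - L))).
  { apply (ex_series_le (fun k => w k * (r k - L)) (fun k => w k * Rabs (r k - L)));
      [|apply (ex_series_weighted_abs _ _ B); auto].
    intros k; change (norm (w k * (r k - L))) with (Rabs (w k * (r k - L))).
    rewrite Rabs_mult, Rabs_pos_eq; auto; lra. }
  assert (HexL : ex_series (fun k => w k * L)) by exact (ex_series_scal_r L w Hex).
  assert (Hexr : ex_series (fun k => w k * r k)).
  { eapply ex_series_ext; [|exact (ex_series_plus _ _ Hexd HexL)].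
    intros k; unfold plus; simpl; ring. }
  replace (Series (fun k => w k * r k) - Series w * L) with (Series (fun k => w k * (r k - L))).
  - apply Series_weighted_le; auto.
  - rewrite <- Series_scal_r, <- Series_minus by auto; apply Series_ext; intros; ring.
Qed.

Lemma filterlim_Series_dominated {T} {F : (T -> Prop) -> Prop} {FF : Filter F}
  (w : nat -> R) (r : nat -> T -> R) (L B : R) :
  (forall k, 0 <= w k) -> ex_series w -> (forall k s, Rabs (r k s) <= B) ->
  (forall k, filterlim (r k) F (locally L)) ->
  filterlim (fun s => Series (fun k => w k * r k s)) F (locally (Series w * L)).
Proof.
  intros Hw Hex Hb Hr; apply filterlim_locally; intros eps.
  pose proof (cond_pos eps) as Heps.
  set (SW := Series w); set (B' := Rabs B + Rabs L).
  assert (HSW : 0 <= SW) by (apply Series_nonneg; auto).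
  assert (HB' : 0 <= B') by (unfold B'; pose proof (Rabs_pos B); pose proof (Rabs_pos L); lra).
  set (e1 := eps / (2 * (B' + 1))).
  assert (He1 : 0 < e1) by (unfold e1; apply Rdiv_lt_0_compat; lra).
  assert (Hlim : is_lim_seq (sum_n w) SW) by exact (Series_correct _ Hex).
  apply is_lim_seq_spec in Hlim.
  destruct (Hlim (mkposreal e1 He1)) as [K HK]; simpl in HK.
  specialize (HK K (Nat.le_refl K)); apply Rabs_lt_between in HK.
  set (eta := eps / (2 * (SW + 1))).
  assert (Heta : 0 < eta) by (unfold eta; apply Rdiv_lt_0_compat; lra).
  assert (Hnear : forall k, F (fun s => Rabs (r k s - L) <= eta)).
  { intros k; pose proof (proj1 (filterlim_locally _ _) (Hr k) (mkposreal eta Heta)) as Hk.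
    eapply filter_imp; [|exact Hk]; intros s Hs; left; exact Hs. }
  eapply filter_imp; [|exact (filter_forall_le _ K Hnear)]; intros s Hs.
  assert (Hdev : forall k, Rabs (r k s - L) <= B').
  { intros k; eapply Rle_trans; [apply Rabs_triang|]; rewrite Rabs_Ropp.
    pose proof (Hb k s); pose proof (Rle_abs B); unfold B'; lra. }
  pose proof (Series_weighted_dev_le w (fun k => r k s) L K eta B' Hw Hex Hs Hdev) as Hbound.
  assert (eta * SW < eps / 2).
  { unfold eta; apply (Rmult_lt_reg_r (2 * (SW + 1))); [lra|].
    replace (eps / (2 * (SW + 1)) * SW * (2 * (SW + 1))) with (eps * SW) by (field; lra).
    nra. }
  assert (B' * (SW - sum_n w K) <= B' * e1) by (apply Rmult_le_compat_l; lra).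
  assert (B' * e1 < eps / 2).
  { unfold e1; apply (Rmult_lt_reg_r (2 * (B' + 1))); [lra|].
    replace (B' * (eps / (2 * (B' + 1))) * (2 * (B' + 1))) with (eps * B') by (field; lra).
    nra. }
  change (Rabs (Series (fun k => w k * r k s) - SW * L) < eps); fold SW in Hbound; lra.
Qed.

Lemma ln_le_pred x : 0 < x -> ln x <= x - 1.
Proof. intros Hx; pose proof (exp_ineq1_le (ln x)); rewrite exp_ln in *; auto; lra. Qed.

Lemma exp_le_compat x y : x <= y -> exp x <= exp y.
Proof. intros [Hxy|Hxy]; [left; apply exp_increasing; auto|rewrite Hxy; lra]. Qed.

(* Comparison of [x^(-1-a)] with the increment of its antiderivative [-x^(-a) / a]. *)
Lemma inv_Rpower_le_diff a x : 0 < a -> 2 <= x ->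
  / Rpower x (1 + a) <= (Rpower (x - 1) (- a) - Rpower x (- a)) / a.
Proof.
  intros Ha Hx; unfold Rpower.
  assert (Hln : ln (x - 1) <= ln x - / x).
  { replace (x - 1) with (x * ((x - 1) / x)) by (field; lra).
    rewrite ln_mult by (try apply Rdiv_lt_0_compat; lra).
    pose proof (ln_le_pred ((x - 1) / x) ltac:(apply Rdiv_lt_0_compat; lra)) as H.
    replace ((x - 1) / x - 1) with (- / x) in H by (field; lra); lra. }
  set (E := exp (- a * ln x)); assert (HE : 0 < E) by apply exp_pos.
  assert (E1 : / exp ((1 + a) * ln x) = E / x).
  { unfold E; rewrite <- exp_Ropp.
    replace (- ((1 + a) * ln x)) with (- a * ln x + - ln x) by ring.
    rewrite exp_plus, exp_Ropp, exp_ln by lra; field; lra. }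
  assert (E2 : E * (1 + a / x) <= exp (- a * ln (x - 1))).
  { apply Rle_trans with (E * exp (a / x)).
    - apply Rmult_le_compat_l; [lra|]; pose proof (exp_ineq1_le (a / x)); lra.
    - unfold E; rewrite <- exp_plus; apply exp_le_compat.
      assert (a * ln (x - 1) <= a * (ln x - / x)) by (apply Rmult_le_compat_l; lra).
      unfold Rdiv; nra. }
  rewrite E1; fold E; apply (Rmult_le_reg_r a); auto.
  replace ((exp (- a * ln (x - 1)) - E) / a * a) with (exp (- a * ln (x - 1)) - E) by (field; lra).
  replace (E / x * a) with (E * (a / x)) by (field; lra); nra.
Qed.

Lemma sum_n_inv_Rpower_le a N : 0 < a ->
  sum_n (fun k => / Rpower (INR (S k)) (1 + a)) N <= 1 + (1 - Rpower (INR (S N)) (- a)) / a.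
Proof.
  intros Ha; induction N as [|N IH].
  - rewrite sum_O; replace (INR 1) with 1 by reflexivity.
    assert (R1 : forall z, Rpower 1 z = 1)
      by (intros z; unfold Rpower; rewrite ln_1, Rmult_0_r; apply exp_0).
    rewrite !R1, Rinv_1; unfold Rdiv; lra.
  - rewrite sum_Sn; change (plus ?x ?y) with (x + y).
    pose proof (inv_Rpower_le_diff a (INR (S (S N))) Ha) as Hstep.
    replace (INR (S (S N)) - 1) with (INR (S N)) in Hstep by (rewrite (S_INR (S N)); ring).
    assert (2 <= INR (S (S N))) by (rewrite !S_INR; pose proof (pos_INR N); lra).
    specialize (Hstep ltac:(lra)); unfold Rdiv in *; lra.
Qed.

Lemma ex_series_inv_Rpower a : 0 < a -> ex_series (fun k => / Rpower (INR (S k)) (1 + a)).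
Proof.
  intros Ha; apply (ex_series_bounded_nonneg _ (1 + 1 / a)).
  - intros k; left; apply Rinv_0_lt_compat; unfold Rpower; apply exp_pos.
  - intros N; eapply Rle_trans; [apply sum_n_inv_Rpower_le; auto|].
    assert (0 < Rpower (INR (S N)) (- a)) by (unfold Rpower; apply exp_pos).
    unfold Rdiv; apply Rplus_le_compat_l, Rmult_le_compat_r; [left; apply Rinv_0_lt_compat|]; lra.
Qed.

Lemma exp_INR_mult n x : exp (INR n * x) = exp x ^ n.
Proof.
  induction n as [|n IH]; [simpl; rewrite Rmult_0_l, exp_0; auto|].
  rewrite S_INR, Rmult_plus_distr_r, Rmult_1_l, exp_plus, IH; simpl; ring.
Qed.

Lemma INR_S_pos k : 0 < INR (S k).
Proof. apply lt_0_INR; lia. Qed.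

Lemma INR_S_ge_1 k : 1 <= INR (S k).
Proof. rewrite S_INR; pose proof (pos_INR k); lra. Qed.

(* Half of the exponential decay absorbs the polynomial factor, via
   [(y/n)^n <= e^y] with [y = -l x / 2]. *)
Lemma pow_mul_exp_le n x l : x < 0 -> 0 <= l ->
  l ^ n * exp (l * x) <= (2 * INR n / - x) ^ n * exp (l * x / 2).
Proof.
  intros Hx Hl; destruct n as [|n].
  - simpl; rewrite !Rmult_1_l; apply exp_le_compat; nra.
  - set (y := - l * x / 2); assert (Hy : 0 <= y) by (unfold y; nra).
    pose proof (INR_S_pos n) as Hn.
    assert (El : l = (2 * INR (S n) / - x) * (y / INR (S n))) by (unfold y; field; lra).
    assert (Ee : exp (l * x) = exp (l * x / 2) * exp (- y))
      by (rewrite <- exp_plus; f_equal; unfold y; field).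
    assert (Hyn : (y / INR (S n)) ^ S n * exp (- y) <= 1).
    { assert (Hey : exp y = exp (y / INR (S n)) ^ S n)
        by (rewrite <- exp_INR_mult; f_equal; field; lra).
      assert ((y / INR (S n)) ^ S n <= exp y).
      { rewrite Hey; apply pow_incr; split.
        - apply Rmult_le_pos; auto; left; apply Rinv_0_lt_compat; auto.
        - pose proof (exp_ineq1_le (y / INR (S n))); lra. }
      assert (exp y * exp (- y) = 1)
        by (rewrite <- exp_plus; replace (y + - y) with 0 by ring; apply exp_0).
      pose proof (exp_pos (- y)); nra. }
    assert (0 <= (2 * INR (S n) / - x) ^ S n)
      by (apply pow_le, Rmult_le_pos; [lra|left; apply Rinv_0_lt_compat; lra]).
    pose proof (exp_pos (l * x / 2)).
    rewrite Ee, El at 1; rewrite Rpow_mult_distr.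
    replace ((2 * INR (S n) / - x) ^ S n * (y / INR (S n)) ^ S n * (exp (l * x / 2) * exp (- y)))
      with ((2 * INR (S n) / - x) ^ S n * exp (l * x / 2) * ((y / INR (S n)) ^ S n * exp (- y)))
      by ring.
    rewrite <- (Rmult_1_r ((2 * INR (S n) / - x) ^ S n * exp (l * x / 2))) at 2.
    apply Rmult_le_compat_l; nra.
Qed.

Lemma ex_series_exp_S c : c < 0 -> ex_series (fun k => exp (INR (S k) * c)).
Proof.
  intros Hc; apply (ex_series_ext (fun k => exp c * exp c ^ k)).
  { intros k; rewrite exp_INR_mult; reflexivity. }
  apply ex_series_scal_R; exists (/ (1 - exp c)); apply is_series_geom.
  rewrite Rabs_pos_eq by (left; apply exp_pos).
  rewrite <- exp_0; apply exp_increasing; auto.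
Qed.

(* [polyexp n x = sum_(k >= 1) k^(n-1) e^(k x)], the polylogarithm [Li_(1-n) (e^x)]. *)
Definition polyexp_term (n : nat) (x : R) (k : nat) : R :=
  INR (S k) ^ n / INR (S k) * exp (INR (S k) * x).

Definition polyexp (n : nat) (x : R) : R := Series (polyexp_term n x).

Lemma polyexp_term_nonneg n x k : 0 <= polyexp_term n x k.
Proof.
  unfold polyexp_term; pose proof (INR_S_pos k).
  apply Rmult_le_pos; [|left; apply exp_pos].
  apply Rmult_le_pos; [apply pow_le; lra|left; apply Rinv_0_lt_compat; lra].
Qed.

Lemma polyexp_term_le_compat n x y k : x <= y -> polyexp_term n x k <= polyexp_term n y k.
Proof.
  intros Hxy; pose proof (INR_S_pos k); unfold polyexp_term.
  apply Rmult_le_compat_l.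
  - apply Rmult_le_pos; [apply pow_le; lra|left; apply Rinv_0_lt_compat; lra].
  - apply exp_le_compat; nra.
Qed.

Lemma ex_series_polyexp n x : x < 0 -> ex_series (polyexp_term n x).
Proof.
  intros Hx.
  apply (ex_series_le_nonneg _ (fun k => (2 * INR n / - x) ^ n * exp (INR (S k) * (x / 2)))).
  - intros k; split; [apply polyexp_term_nonneg|].
    pose proof (INR_S_ge_1 k); pose proof (exp_pos (INR (S k) * x)).
    assert (0 <= INR (S k) ^ n) by (apply pow_le; lra).
    assert (Hk : polyexp_term n x k <= INR (S k) ^ n * exp (INR (S k) * x)).
    { unfold polyexp_term, Rdiv.
      rewrite <- (Rmult_1_r (INR (S k) ^ n)) at 2.
      apply Rmult_le_compat_r; [lra|]; apply Rmult_le_compat_l; [lra|].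
      rewrite <- Rinv_1; apply Rinv_le_contravar; lra. }
    eapply Rle_trans; [exact Hk|].
    replace (INR (S k) * (x / 2)) with (INR (S k) * x / 2) by field.
    apply pow_mul_exp_le; lra.
  - apply ex_series_scal_R, ex_series_exp_S; lra.
Qed.

Lemma polyexp_nonneg n x : x < 0 -> 0 <= polyexp n x.
Proof.
  intros Hx; apply Series_nonneg; [apply polyexp_term_nonneg|apply ex_series_polyexp; auto].
Qed.

Lemma polyexp_le_compat n x y : x <= y -> y < 0 -> polyexp n x <= polyexp n y.
Proof.
  intros Hxy Hy; apply Series_le; [|apply ex_series_polyexp; auto].
  intros k; split; [apply polyexp_term_nonneg|apply polyexp_term_le_compat; auto].
Qed.

Lemma polyexp_le_shift n x y : y <= x -> x < 0 -> polyexp n y <= exp (y - x) * polyexp n x.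
Proof.
  intros Hyx Hx; unfold polyexp; rewrite <- Series_scal_l.
  apply Series_le; [|apply ex_series_scal_R, ex_series_polyexp; auto].
  intros k; split; [apply polyexp_term_nonneg|]; unfold polyexp_term.
  pose proof (INR_S_ge_1 k).
  replace (exp (y - x) * (INR (S k) ^ n / INR (S k) * exp (INR (S k) * x)))
    with (INR (S k) ^ n / INR (S k) * (exp (y - x) * exp (INR (S k) * x))) by ring.
  apply Rmult_le_compat_l.
  - apply Rmult_le_pos; [apply pow_le; lra|left; apply Rinv_0_lt_compat; lra].
  - rewrite <- exp_plus; apply exp_le_compat; rewrite S_INR in *; nra.
Qed.

Lemma is_derive_polyexp n x : x < 0 -> is_derive (polyexp n) x (polyexp (S n) x).
Proof.
  intros Hx; unfold polyexp.
  apply (is_derive_Series (fun k z => polyexp_term n z k) (fun k z => polyexp_term (S n) z k)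
           (fun k z => polyexp_term (S (S n)) z k) (polyexp_term (S (S n)) (x / 2)) x (- x / 2));
    try lra.
  - intros k z Hz; apply Rabs_le_between in Hz.
    split; [|split]; [unfold polyexp_term; generalize (INR_S_pos k); generalize (INR (S k));
                      intros r Hr; auto_derive; auto; simpl; field; lra ..|].
    rewrite Rabs_pos_eq by apply polyexp_term_nonneg; apply polyexp_term_le_compat; lra.
  - apply ex_series_polyexp; lra.
  - intros z Hz; apply Rabs_le_between in Hz; apply ex_series_polyexp; lra.
  - apply ex_series_polyexp; lra.
Qed.

Lemma polyexp_1 y : y < 0 -> polyexp 1 y = exp y / (1 - exp y).
Proof.
  intros Hy; assert (He : exp y < 1) by (rewrite <- exp_0; apply exp_increasing; auto).
  pose proof (exp_pos y).
  unfold polyexp; rewrite (Series_ext _ (fun k => exp y * exp y ^ k)).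
  - rewrite Series_scal_l, (is_series_unique _ (/ (1 - exp y))); [reflexivity|].
    apply is_series_geom; rewrite Rabs_pos_eq; lra.
  - intros k; unfold polyexp_term; rewrite exp_INR_mult, pow_1.
    pose proof (INR_S_pos k); rewrite Rdiv_diag by lra; simpl; ring.
Qed.

Lemma polyexp_0_le y : y < 0 -> polyexp 0 y <= exp y / (1 - exp y).
Proof.
  intros Hy; rewrite <- polyexp_1; auto.
  apply Series_le; [|apply ex_series_polyexp; auto].
  intros k; split; [apply polyexp_term_nonneg|]; unfold polyexp_term.
  rewrite pow_O, pow_1; pose proof (INR_S_ge_1 k); pose proof (exp_pos (INR (S k) * y)).
  apply Rmult_le_compat_r; [lra|].
  rewrite Rdiv_diag by lra; unfold Rdiv; rewrite Rmult_1_l, <- Rinv_1.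
  apply Rinv_le_contravar; lra.
Qed.

Lemma polyexp_0_add_ln_bound y : y <= -1 -> Rabs (polyexp 0 y + ln (1 - exp y)) <= 4 * exp y.
Proof.
  intros Hy.
  assert (He : exp y <= / 2).
  { apply Rle_trans with (exp (-1)); [apply exp_le_compat; auto|].
    assert (2 <= exp 1) by (pose proof (exp_ineq1_le 1); lra).
    assert (exp (-1) * exp 1 = 1)
      by (rewrite <- exp_plus; replace (-1 + 1) with 0 by ring; apply exp_0).
    pose proof (exp_pos (-1)); nra. }
  pose proof (exp_pos y).
  assert (Hq : exp y / (1 - exp y) <= 2 * exp y).
  { apply (Rmult_le_reg_r (1 - exp y)); [lra|].
    unfold Rdiv; rewrite Rmult_assoc, Rinv_l by lra; nra. }
  pose proof (polyexp_0_le y ltac:(lra)); pose proof (polyexp_nonneg 0 y ltac:(lra)).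
  assert (Lup : ln (1 - exp y) <= 0) by (pose proof (ln_le_pred (1 - exp y) ltac:(lra)); lra).
  assert (Llow : - (exp y / (1 - exp y)) <= ln (1 - exp y)).
  { assert (Hinv : 0 < / (1 - exp y)) by (apply Rinv_0_lt_compat; lra).
    replace (ln (1 - exp y)) with (- ln (/ (1 - exp y))) by (rewrite ln_Rinv; [ring|lra]).
    pose proof (ln_le_pred (/ (1 - exp y)) Hinv).
    assert (/ (1 - exp y) - 1 = exp y / (1 - exp y)) by (field; lra).
    lra. }
  apply Rabs_le; lra.
Qed.

(* The difference has zero derivative on [(-oo, 0)] and tends to [0] at [-oo]. *)
Lemma polyexp_0 y : y < 0 -> polyexp 0 y = - ln (1 - exp y).
Proof.
  intros Hy.
  set (d := fun y => polyexp 0 y + ln (1 - exp y)).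
  assert (Hd : forall z, z < 0 -> is_derive d z 0).
  { intros z Hz; unfold d.
    assert (He : exp z < 1) by (rewrite <- exp_0; apply exp_increasing; auto).
    replace 0 with (polyexp 1 z + (- exp z / (1 - exp z))) by (rewrite polyexp_1; auto; field; lra).
    apply (is_derive_plus (polyexp 0) (fun y => ln (1 - exp y))); [apply is_derive_polyexp; auto|].
    auto_derive; [lra|field; lra]. }
  assert (Hconst : forall z, z < y -> d z = d y).
  { intros z Hzy; destruct (MVT_cor2 d (fun _ => 0) z y Hzy) as [c [Hc _]].
    - intros c Hc; apply is_derive_Reals, Hd; lra.
    - lra. }
  enough (d y = 0) by (unfold d in *; lra).
  apply cond_eq; intros eps Heps.
  set (z := Rmin (Rmin (y - 1) (-1)) (ln (eps / 8))).
  assert (Hz1 : z <= -1) by (unfold z; pose proof (Rmin_l (Rmin (y - 1) (-1)) (ln (eps / 8)));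
                             pose proof (Rmin_r (y - 1) (-1)); lra).
  assert (Hzy : z < y) by (unfold z; pose proof (Rmin_l (Rmin (y - 1) (-1)) (ln (eps / 8)));
                           pose proof (Rmin_l (y - 1) (-1)); lra).
  assert (Hze : exp z <= eps / 8)
    by (rewrite <- (exp_ln (eps / 8)) by lra; apply exp_le_compat, Rmin_r).
  rewrite <- (Hconst z Hzy).
  replace (d z - 0) with (polyexp 0 z + ln (1 - exp z)) by (unfold d; ring).
  pose proof (polyexp_0_add_ln_bound z Hz1); lra.
Qed.

(* The [n]-th termwise derivative of [Fp p t = sum_j polyexp 0 (j^p t)]. *)
Definition Fp_deriv_term (p n : nat) (t : R) (j : nat) : R :=
  (INR (S j) ^ p) ^ n * polyexp n (INR (S j) ^ p * t).

Definition Fp_deriv (p n : nat) (t : R) : R := Series (Fp_deriv_term p n t).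

Lemma INR_S_le_pow p j : (1 <= p)%nat -> INR (S j) <= INR (S j) ^ p.
Proof.
  intros Hp; rewrite <- (pow_1 (INR (S j))) at 1; apply Rle_pow; auto; apply INR_S_ge_1.
Qed.

Lemma INR_S_pow_pos p j : 0 < INR (S j) ^ p.
Proof. apply pow_lt, INR_S_pos. Qed.

Lemma Fp_deriv_term_nonneg p n t j : t < 0 -> 0 <= Fp_deriv_term p n t j.
Proof.
  intros Ht; pose proof (INR_S_pow_pos p j); unfold Fp_deriv_term.
  apply Rmult_le_pos; [apply pow_le; lra|apply polyexp_nonneg; nra].
Qed.

(* [polyexp_le_shift] pulls the argument [j^p t] back to [t], and [pow_mul_exp_le]
   absorbs the factor [(j^p)^n] into half of the decay of [e^(j^p t)]. *)
Lemma ex_series_Fp_deriv p n t : (1 <= p)%nat -> t < 0 -> ex_series (Fp_deriv_term p n t).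
Proof.
  intros Hp Ht.
  set (C := (2 * INR n / - t) ^ n).
  assert (HC : 0 <= C).
  { apply pow_le, Rmult_le_pos; [pose proof (pos_INR n); lra|left; apply Rinv_0_lt_compat; lra]. }
  apply (ex_series_le_nonneg _ (fun j => (exp (- t) * polyexp n t * C) * exp (INR (S j) * (t / 2)))).
  - intros j; split; [apply Fp_deriv_term_nonneg; auto|]; unfold Fp_deriv_term.
    set (a := INR (S j) ^ p).
    assert (Ha : INR (S j) <= a) by (apply INR_S_le_pow; auto).
    pose proof (INR_S_ge_1 j).
    assert (Hsh : polyexp n (a * t) <= exp (a * t + - t) * polyexp n t)
      by (apply polyexp_le_shift; nra).
    assert (Hb : a ^ n * exp (a * t) <= C * exp (a * t / 2)) by (apply pow_mul_exp_le; lra).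
    assert (He : exp (a * t / 2) <= exp (INR (S j) * (t / 2)))
      by (apply exp_le_compat; assert ((a - INR (S j)) * t <= 0) by nra; nra).
    assert (0 <= a ^ n) by (apply pow_le; lra).
    assert (0 <= polyexp n t) by (apply polyexp_nonneg; auto).
    pose proof (exp_pos (- t)).
    eapply Rle_trans; [apply Rmult_le_compat_l; [auto|exact Hsh]|].
    rewrite exp_plus.
    replace (a ^ n * (exp (a * t) * exp (- t) * polyexp n t))
      with ((a ^ n * exp (a * t)) * (exp (- t) * polyexp n t)) by ring.
    replace (exp (- t) * polyexp n t * C * exp (INR (S j) * (t / 2)))
      with ((C * exp (INR (S j) * (t / 2))) * (exp (- t) * polyexp n t)) by ring.
    apply Rmult_le_compat_r; [nra|].
    eapply Rle_trans; [exact Hb|]; apply Rmult_le_compat_l; auto.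
  - apply ex_series_scal_R, ex_series_exp_S; lra.
Qed.

Lemma is_derive_Fp_deriv_term p n t j :
  t < 0 -> is_derive (fun z => Fp_deriv_term p n z j) t (Fp_deriv_term p (S n) t j).
Proof.
  intros Ht; pose proof (INR_S_pow_pos p j); unfold Fp_deriv_term.
  set (a := INR (S j) ^ p).
  replace (a ^ S n * polyexp (S n) (a * t)) with (a ^ n * (a * polyexp (S n) (a * t)))
    by (simpl; ring).
  apply is_derive_scal.
  apply (is_derive_comp (polyexp n) (fun z => a * z) t (polyexp (S n) (a * t)) a).
  - apply is_derive_polyexp; unfold a; nra.
  - auto_derive; auto; ring.
Qed.

Lemma is_derive_Fp_deriv p n t :
  (1 <= p)%nat -> t < 0 -> is_derive (Fp_deriv p n) t (Fp_deriv p (S n) t).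
Proof.
  intros Hp Ht; unfold Fp_deriv.
  apply (is_derive_Series (fun j z => Fp_deriv_term p n z j) (fun j z => Fp_deriv_term p (S n) z j)
           (fun j z => Fp_deriv_term p (S (S n)) z j) (Fp_deriv_term p (S (S n)) (t / 2)) t (- t / 2));
    try lra.
  - intros j z Hz; apply Rabs_le_between in Hz.
    split; [|split]; [apply is_derive_Fp_deriv_term; lra ..|].
    rewrite Rabs_pos_eq by (apply Fp_deriv_term_nonneg; lra).
    pose proof (INR_S_pow_pos p j); unfold Fp_deriv_term.
    apply Rmult_le_compat_l; [apply pow_le; lra|apply polyexp_le_compat; nra].
  - apply ex_series_Fp_deriv; auto; lra.
  - intros z Hz; apply Rabs_le_between in Hz; apply ex_series_Fp_deriv; auto; lra.
  - apply ex_series_Fp_deriv; auto.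
Qed.

Lemma Fp_eq_Fp_deriv_0 p t : t < 0 -> Fp p t = Fp_deriv p 0 t.
Proof.
  intros Ht; unfold Fp, Fp_deriv; rewrite <- Series_opp; apply Series_ext; intros j.
  unfold Fp_deriv_term; rewrite pow_O, Rmult_1_l, polyexp_0; [ring|].
  pose proof (INR_S_pow_pos p j); nra.
Qed.

Lemma Derive_n_Fp p m t : (1 <= p)%nat -> t < 0 -> Derive_n (Fp p) m t = Fp_deriv p m t.
Proof.
  intros Hp; revert t; induction m as [|m IH]; intros t Ht; [apply Fp_eq_Fp_deriv_0; auto|].
  simpl; rewrite (Derive_ext_loc _ (Fp_deriv p m)).
  - apply is_derive_unique, is_derive_Fp_deriv; auto.
  - exists (mkposreal (- t) ltac:(lra)); intros y Hy; apply IH.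
    change (Rabs (y - t) < - t) in Hy; apply Rabs_lt_between in Hy; lra.
Qed.

Definition riemann_sum (g : R -> R) (h : R) : R := Series (fun j => h * g (INR (S j) * h)).

Section UnimodalRiemannSum.

Variables (g : R -> R) (M c I : R).
Hypothesis g_cont : forall y, continuous g y.
Hypothesis g_bounds : forall y, 0 <= y -> 0 <= g y <= M.
Hypothesis c_nonneg : 0 <= c.
Hypothesis g_incr : forall y1 y2, 0 <= y1 -> y1 <= y2 -> y2 <= c -> g y1 <= g y2.
Hypothesis g_decr : forall y1 y2, c <= y1 -> y1 <= y2 -> g y2 <= g y1.
Hypothesis RInt_le_I : forall b, 0 <= b -> RInt g 0 b <= I.
Hypothesis RInt_approx_I :
  forall eps, 0 < eps -> exists B, forall b, B <= b -> I - eps <= RInt g 0 b.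

Lemma ex_RInt_unimodal a b : ex_RInt g a b.
Proof. apply (@ex_RInt_continuous R_CompleteNormedModule); intros; apply g_cont. Qed.

Lemma RInt_cell_bounds a h lo hi : 0 <= h ->
  (forall y, a < y < a + h -> lo <= g y <= hi) -> h * lo <= RInt g a (a + h) <= h * hi.
Proof.
  intros [Hh|Hh] Hg; [|subst; rewrite Rplus_0_r, RInt_point; unfold zero; simpl; lra].
  assert (Hc : forall v, RInt (fun _ => v) a (a + h) = h * v)
    by (intros v; rewrite RInt_const; unfold scal; simpl; unfold mult; simpl; ring).
  split; [rewrite <- Hc|rewrite <- Hc]; apply RInt_le; try lra;
    try apply ex_RInt_const; try apply ex_RInt_unimodal; intros; apply Hg; auto.
Qed.

Variable h : R.
Hypothesis h_pos : 0 < h.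

Fixpoint riemann_partial (J : nat) : R :=
  match J with
  | O => 0
  | S J => riemann_partial J + h * g (INR (S J) * h)
  end.

Definition riemann_error (J : nat) : R := riemann_partial J - RInt g 0 (INR J * h).

Lemma riemann_error_S J :
  riemann_error (S J) = riemann_error J + h * g (INR J * h + h) - RInt g (INR J * h) (INR J * h + h).
Proof.
  unfold riemann_error.
  change (riemann_partial (S J)) with (riemann_partial J + h * g (INR (S J) * h)).
  replace (INR (S J) * h) with (INR J * h + h) by (rewrite S_INR; ring).
  rewrite <- (RInt_Chasles g 0 (INR J * h) (INR J * h + h)) by apply ex_RInt_unimodal.
  unfold plus; simpl; ring.
Qed.

(* Right-endpoint sums overestimate while [g] increases and underestimate once it
   decreases, so only the cell around the mode [c] costs more than [h M]. *)
Lemma riemann_error_bounds J :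
  (INR J * h <= c -> 0 <= riemann_error J <= h * g (INR J * h)) /\
  riemann_error J <= 2 * h * M /\
  - 2 * h * M <= riemann_error J - h * g (INR J * h).
Proof.
  induction J as [|J [IHinc [IHup IHlow]]].
  - unfold riemann_error; simpl; rewrite Rmult_0_l, RInt_point; unfold zero; simpl.
    pose proof (g_bounds 0 (Rle_refl 0)); split; [intros; split; nra|split; nra].
  - rewrite riemann_error_S.
    replace (INR (S J) * h) with (INR J * h + h) by (rewrite S_INR; ring).
    set (a := INR J * h) in *.
    assert (Ha : 0 <= a) by (unfold a; pose proof (pos_INR J); nra).
    pose proof (g_bounds a Ha) as Ga; pose proof (g_bounds (a + h) ltac:(lra)) as Gb.
    assert (Icell : 0 <= RInt g a (a + h) <= h * M).
    { replace 0 with (h * 0) by ring; apply RInt_cell_bounds; [lra|].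
      intros y Hy; apply g_bounds; lra. }
    assert (0 <= h * g a <= h * M) by (split; [apply Rmult_le_pos|apply Rmult_le_compat_l]; lra).
    assert (0 <= h * g (a + h) <= h * M) by (split; [apply Rmult_le_pos|apply Rmult_le_compat_l]; lra).
    destruct (Rle_or_lt (a + h) c) as [Hinc|Hdec].
    + assert (h * g a <= RInt g a (a + h) <= h * g (a + h)).
      { apply RInt_cell_bounds; [lra|]; intros y Hy; split; apply g_incr; lra. }
      specialize (IHinc ltac:(lra)); split; [intros; lra|split; lra].
    + split; [intros; lra|].
      destruct (Rle_or_lt a c) as [Hmode|Hpast]; [specialize (IHinc Hmode); split; lra|].
      assert (h * g (a + h) <= RInt g a (a + h) <= h * g a).
      { apply RInt_cell_bounds; [lra|]; intros y Hy; split; apply g_decr; lra. }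
      split; lra.
Qed.

Lemma riemann_error_past_mode J : c <= h -> riemann_error (S J) <= h * g h.
Proof.
  intros Hc; induction J as [|J IH].
  - unfold riemann_error; simpl; rewrite Rmult_1_l, Rplus_0_l.
    assert (0 <= RInt g 0 h).
    { apply RInt_ge_0; [lra|apply ex_RInt_unimodal|intros; apply g_bounds; lra]. }
    lra.
  - rewrite riemann_error_S; set (a := INR (S J) * h).
    assert (Ha : h <= a) by (unfold a; pose proof (INR_S_ge_1 J); nra).
    assert (h * g (a + h) <= RInt g a (a + h)).
    { apply (RInt_cell_bounds a h (g (a + h)) (g a)); [lra|].
      intros y Hy; split; apply g_decr; lra. }
    lra.
Qed.

Lemma sum_n_riemann J : sum_n (fun j => h * g (INR (S j) * h)) J = riemann_partial (S J).
Proof.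
  induction J as [|J IH]; [rewrite sum_O; simpl; ring|].
  rewrite sum_Sn, IH; reflexivity.
Qed.

Lemma riemann_term_nonneg j : 0 <= h * g (INR (S j) * h).
Proof.
  pose proof (INR_S_pos j); apply Rmult_le_pos; [lra|apply g_bounds; nra].
Qed.

Lemma riemann_partial_le J : riemann_partial (S J) <= I + 2 * h * M.
Proof.
  destruct (riemann_error_bounds (S J)) as [_ [Hup _]]; unfold riemann_error in Hup.
  pose proof (RInt_le_I (INR (S J) * h) ltac:(pose proof (INR_S_pos J); nra)); lra.
Qed.

Lemma ex_series_riemann : ex_series (fun j => h * g (INR (S j) * h)).
Proof.
  apply (ex_series_bounded_nonneg _ (I + 2 * h * M) riemann_term_nonneg).
  intros J; rewrite sum_n_riemann; apply riemann_partial_le.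
Qed.

Lemma riemann_sum_nonneg : 0 <= riemann_sum g h.
Proof. apply Series_nonneg; [apply riemann_term_nonneg|apply ex_series_riemann]. Qed.

Lemma riemann_sum_approx : Rabs (riemann_sum g h - I) <= 2 * h * M.
Proof.
  unfold riemann_sum; apply Rabs_le; split.
  - apply Rnot_lt_le; intros Hlt.
    set (eps := (I - 2 * h * M - Series (fun j => h * g (INR (S j) * h))) / 2).
    destruct (RInt_approx_I eps ltac:(unfold eps; lra)) as [B HB].
    destruct (INR_unbounded (B / h)) as [N HN].
    assert (HBN : B <= INR (S N) * h).
    { rewrite S_INR; apply (Rmult_gt_compat_r h) in HN; auto.
      unfold Rdiv in HN; rewrite Rmult_assoc, Rinv_l in HN by lra; nra. }
    destruct (riemann_error_bounds (S N)) as [_ [_ Hlow]]; unfold riemann_error in Hlow.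
    pose proof (sum_n_le_Series _ N riemann_term_nonneg ex_series_riemann) as Hpart.
    rewrite sum_n_riemann in Hpart.
    pose proof (HB _ HBN); pose proof (g_bounds (INR (S N) * h) ltac:(pose proof (INR_S_pos N); nra)).
    unfold eps in *; nra.
  - enough (Series (fun j => h * g (INR (S j) * h)) <= I + 2 * h * M) by lra.
    apply (ex_series_bounded_nonneg _ (I + 2 * h * M) riemann_term_nonneg).
    intros J; rewrite sum_n_riemann; apply riemann_partial_le.
Qed.

Lemma riemann_sum_le_past_mode : c <= h -> riemann_sum g h <= I + h * g h.
Proof.
  intros Hc; apply (ex_series_bounded_nonneg _ _ riemann_term_nonneg).
  intros J; rewrite sum_n_riemann.
  pose proof (riemann_error_past_mode J Hc); unfold riemann_error in *.
  pose proof (RInt_le_I (INR (S J) * h) ltac:(pose proof (INR_S_pos J); nra)); lra.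
Qed.

End UnimodalRiemannSum.

Definition RInt_0_infty (g : R -> R) : R := real (Lim_seq (fun n => RInt g 0 (INR n))).

Section NonnegImproperIntegral.

Variables (g : R -> R) (K : R).
Hypothesis g_cont : forall y, continuous g y.
Hypothesis g_nonneg : forall y, 0 <= y -> 0 <= g y.
Hypothesis RInt_bounded : forall b, 0 <= b -> RInt g 0 b <= K.

Lemma RInt_0_le_compat b1 b2 : 0 <= b1 -> b1 <= b2 -> RInt g 0 b1 <= RInt g 0 b2.
Proof.
  intros H1 H12.
  assert (Hex : forall a b, ex_RInt g a b)
    by (intros; apply (@ex_RInt_continuous R_CompleteNormedModule); intros; apply g_cont).
  rewrite <- (RInt_Chasles g 0 b1 b2) by auto; unfold plus; simpl.
  assert (0 <= RInt g b1 b2) by (apply RInt_ge_0; auto; intros; apply g_nonneg; lra).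
  lra.
Qed.

Lemma is_lim_seq_RInt_0_infty : is_lim_seq (fun n => RInt g 0 (INR n)) (RInt_0_infty g).
Proof.
  apply Lim_seq_correct', (ex_finite_lim_seq_incr _ K).
  - intros n; apply RInt_0_le_compat; [apply pos_INR|rewrite S_INR; lra].
  - intros n; apply RInt_bounded, pos_INR.
Qed.

Lemma RInt_le_RInt_0_infty b : 0 <= b -> RInt g 0 b <= RInt_0_infty g.
Proof.
  intros Hb; destruct (INR_unbounded b) as [n Hn].
  apply Rle_trans with (RInt g 0 (INR n)); [apply RInt_0_le_compat; lra|].
  apply (is_lim_seq_incr_compare _ _ is_lim_seq_RInt_0_infty).
  intros k; apply RInt_0_le_compat; [apply pos_INR|rewrite S_INR; lra].
Qed.

Lemma RInt_0_infty_approx eps :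
  0 < eps -> exists B, forall b, B <= b -> RInt_0_infty g - eps <= RInt g 0 b.
Proof.
  intros Heps; pose proof is_lim_seq_RInt_0_infty as Hlim; apply is_lim_seq_spec in Hlim.
  destruct (Hlim (mkposreal eps Heps)) as [N HN]; simpl in HN.
  exists (INR N); intros b Hb; specialize (HN N (Nat.le_refl N)).
  apply Rabs_lt_between in HN; pose proof (RInt_0_le_compat (INR N) b (pos_INR N) Hb); lra.
Qed.

End NonnegImproperIntegral.

Lemma pow_mul_exp_opp_eq m t : (1 <= m)%nat -> t ^ m * exp (- t) = (t * exp (- t / INR m)) ^ m.
Proof.
  intros Hm; rewrite Rpow_mult_distr, <- exp_INR_mult; do 2 f_equal; field.
  apply not_0_INR; lia.
Qed.

Lemma pow_mul_exp_opp_incr m t1 t2 : 0 <= t1 -> t1 <= t2 -> t2 <= INR m ->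
  t1 ^ m * exp (- t1) <= t2 ^ m * exp (- t2).
Proof.
  intros H1 H12 H2; destruct m as [|m]; [simpl in H2; replace t1 with t2 by lra; lra|].
  rewrite !pow_mul_exp_opp_eq by lia; apply pow_incr.
  set (n := INR (S m)) in *; assert (Hn : 0 < n) by apply INR_S_pos.
  split; [apply Rmult_le_pos; [lra|left; apply exp_pos]|].
  set (d := t2 - t1).
  assert (E : exp (- t1 / n) = exp (- t2 / n) * exp (d / n))
    by (rewrite <- exp_plus; f_equal; unfold d; field; lra).
  rewrite E; pose proof (exp_pos (- t2 / n)).
  assert (t1 * exp (d / n) <= t2).
  { assert (Ee : exp (- (d / n)) * exp (d / n) = 1)
      by (rewrite <- exp_plus; replace (- (d / n) + d / n) with 0 by ring; apply exp_0).
    pose proof (exp_ineq1_le (- (d / n))); pose proof (exp_pos (d / n)).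
    assert (t2 * (1 - d / n) >= t1).
    { unfold d; apply Rle_ge, (Rmult_le_reg_r n); auto.
      replace (t2 * (1 - (t2 - t1) / n) * n) with (t2 * n - t2 * (t2 - t1)) by (field; lra).
      nra. }
    assert (Ht : t1 <= t2 * exp (- (d / n))) by nra.
    apply (Rmult_le_compat_r (exp (d / n))) in Ht; [|lra].
    rewrite Rmult_assoc, Ee in Ht; lra. }
  nra.
Qed.

Lemma pow_mul_exp_opp_decr m t1 t2 : INR m <= t1 -> t1 <= t2 ->
  t2 ^ m * exp (- t2) <= t1 ^ m * exp (- t1).
Proof.
  intros H1 H12; destruct m as [|m]; [simpl; rewrite !Rmult_1_l; apply exp_le_compat; lra|].
  rewrite !pow_mul_exp_opp_eq by lia; apply pow_incr.
  set (n := INR (S m)) in *; assert (Hn : 0 < n) by apply INR_S_pos.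
  split; [apply Rmult_le_pos; [lra|left; apply exp_pos]|].
  set (d := t2 - t1).
  assert (E : exp (- t1 / n) = exp (- t2 / n) * exp (d / n))
    by (rewrite <- exp_plus; f_equal; unfold d; field; lra).
  rewrite E; pose proof (exp_pos (- t2 / n)).
  assert (t2 <= t1 * exp (d / n)).
  { pose proof (exp_ineq1_le (d / n)).
    assert (t1 * (1 + d / n) >= t2).
    { unfold d; apply Rle_ge, (Rmult_le_reg_r n); auto.
      replace (t1 * (1 + (t2 - t1) / n) * n) with (t1 * n + t1 * (t2 - t1)) by (field; lra).
      nra. }
    assert (0 <= t1) by lra; nra. }
  nra.
Qed.

Section Integrand.

Variables p m : nat.
Hypothesis p_pos : (1 <= p)%nat.

Definition gfun (y : R) : R := (y ^ p) ^ m * exp (- y ^ p).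

Definition gfun_max : R := (2 * INR m) ^ m.

(* [Rpower 0 x = exp (x * ln 0) = 1], hence the separate case [m = 0]. *)
Definition gfun_mode : R := match m with O => 0 | _ => Rpower (INR m) (/ INR p) end.

Lemma gfun_max_nonneg : 0 <= gfun_max.
Proof. apply pow_le; pose proof (pos_INR m); lra. Qed.

Lemma gfun_nonneg y : 0 <= y -> 0 <= gfun y.
Proof.
  intros Hy; apply Rmult_le_pos; [apply pow_le, pow_le; auto|left; apply exp_pos].
Qed.

Lemma gfun_le_exp_half y : 0 <= y -> gfun y <= gfun_max * exp (- y ^ p / 2).
Proof.
  intros Hy; pose proof (pow_mul_exp_le m (-1) (y ^ p) ltac:(lra) (pow_le _ _ Hy)) as Hb.
  replace (y ^ p * -1) with (- y ^ p) in Hb by ring.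
  replace (2 * INR m / - -1) with (2 * INR m) in Hb by field.
  exact Hb.
Qed.

Lemma gfun_le_max y : 0 <= y -> gfun y <= gfun_max.
Proof.
  intros Hy; eapply Rle_trans; [apply gfun_le_exp_half; auto|].
  rewrite <- (Rmult_1_r gfun_max) at 2; apply Rmult_le_compat_l; [apply gfun_max_nonneg|].
  rewrite <- exp_0; apply exp_le_compat; pose proof (pow_le y p Hy); lra.
Qed.

Lemma gfun_le_exp_linear y : 0 <= y -> gfun y <= gfun_max * exp (1 / 2 - y / 2).
Proof.
  intros Hy; eapply Rle_trans; [apply gfun_le_exp_half; auto|].
  apply Rmult_le_compat_l; [apply gfun_max_nonneg|]; apply exp_le_compat.
  destruct (Rle_or_lt y 1); [pose proof (pow_le y p Hy); lra|].
  pose proof (Rle_pow y 1 p ltac:(lra) p_pos) as Hyp; rewrite pow_1 in Hyp; lra.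
Qed.

Lemma mul_gfun_le y : 0 <= y -> y * gfun y <= 2 * gfun_max * exp (1 / 2).
Proof.
  intros Hy; pose proof (gfun_le_exp_linear y Hy); pose proof gfun_max_nonneg.
  assert (Hye : y * exp (- (y / 2)) <= 2).
  { pose proof (exp_ineq1_le (y / 2)).
    assert (exp (y / 2) * exp (- (y / 2)) = 1)
      by (rewrite <- exp_plus; replace (y / 2 + - (y / 2)) with 0 by ring; apply exp_0).
    pose proof (exp_pos (- (y / 2))); nra. }
  replace (exp (1 / 2 - y / 2)) with (exp (1 / 2) * exp (- (y / 2)))
    in * by (rewrite <- exp_plus; f_equal; ring).
  pose proof (exp_pos (1 / 2)); pose proof (exp_pos (- (y / 2))).
  apply Rle_trans with (y * (gfun_max * (exp (1 / 2) * exp (- (y / 2))))).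
  - apply Rmult_le_compat_l; auto.
  - replace (y * (gfun_max * (exp (1 / 2) * exp (- (y / 2)))))
      with ((gfun_max * exp (1 / 2)) * (y * exp (- (y / 2)))) by ring.
    assert (0 <= gfun_max * exp (1 / 2)) by nra; nra.
Qed.

Lemma gfun_continuous y : continuous gfun y.
Proof. apply (@ex_derive_continuous R_AbsRing R_NormedModule); unfold gfun; auto_derive; auto. Qed.

Lemma ex_RInt_gfun a b : ex_RInt gfun a b.
Proof. apply (@ex_RInt_continuous R_CompleteNormedModule); intros; apply gfun_continuous. Qed.

Lemma RInt_gfun_le b : 0 <= b -> RInt gfun 0 b <= 2 * gfun_max * exp (1 / 2).
Proof.
  intros Hb.
  set (G := fun y => - 2 * gfun_max * exp (1 / 2 - y / 2)).
  assert (HI : is_RInt (fun y => gfun_max * exp (1 / 2 - y / 2)) 0 b (minus (G b) (G 0))).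
  { apply (is_RInt_derive G).
    - intros x _; unfold G; auto_derive; auto.
      replace (1 / 2 + - (x * / 2)) with (1 / 2 - x / 2) by field; field.
    - intros x _; apply (@ex_derive_continuous R_AbsRing R_NormedModule); auto_derive; auto. }
  apply (@is_RInt_unique R_CompleteNormedModule) in HI.
  apply Rle_trans with (RInt (fun y => gfun_max * exp (1 / 2 - y / 2)) 0 b).
  - apply RInt_le; auto; [apply ex_RInt_gfun| |intros; apply gfun_le_exp_linear; lra].
    apply (@ex_RInt_continuous R_CompleteNormedModule); intros.
    apply (@ex_derive_continuous R_AbsRing R_NormedModule); auto_derive; auto.
  - rewrite HI; unfold G, minus, plus, opp; simpl.
    replace (1 / 2 - 0 / 2) with (1 / 2) by field.
    pose proof (exp_pos (1 / 2 - b / 2)); pose proof gfun_max_nonneg; nra.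
Qed.

Definition gfun_integral : R := RInt_0_infty gfun.

Lemma RInt_le_gfun_integral b : 0 <= b -> RInt gfun 0 b <= gfun_integral.
Proof.
  apply (RInt_le_RInt_0_infty gfun (2 * gfun_max * exp (1 / 2)) gfun_continuous gfun_nonneg
           RInt_gfun_le).
Qed.

Lemma gfun_integral_approx eps : 0 < eps -> exists B, forall b, B <= b -> gfun_integral - eps <= RInt gfun 0 b.
Proof.
  apply (RInt_0_infty_approx gfun (2 * gfun_max * exp (1 / 2)) gfun_continuous gfun_nonneg
           RInt_gfun_le).
Qed.

Lemma gfun_integral_pos : 0 < gfun_integral.
Proof.
  apply Rlt_le_trans with (RInt gfun 0 1); [|apply RInt_le_gfun_integral; lra].
  apply RInt_gt_0; [lra| |intros; apply gfun_continuous].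
  intros x Hx; apply Rmult_lt_0_compat; [apply pow_lt, pow_lt; lra|apply exp_pos].
Qed.

Lemma gfun_mode_nonneg : 0 <= gfun_mode.
Proof. unfold gfun_mode; destruct m; [lra|left; apply exp_pos]. Qed.

Lemma gfun_mode_pow : gfun_mode ^ p = INR m.
Proof.
  unfold gfun_mode; destruct m as [|n].
  - destruct p; [lia|simpl; ring].
  - pose proof (INR_S_pos n); assert (0 < INR p) by (apply lt_0_INR; lia).
    rewrite <- Rpower_pow by apply exp_pos.
    rewrite Rpower_mult, Rinv_l by lra; apply Rpower_1; auto.
Qed.

Lemma gfun_incr y1 y2 : 0 <= y1 -> y1 <= y2 -> y2 <= gfun_mode -> gfun y1 <= gfun y2.
Proof.
  intros H1 H12 H2; apply pow_mul_exp_opp_incr.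
  - apply pow_le; auto.
  - apply pow_incr; lra.
  - rewrite <- gfun_mode_pow; apply pow_incr; lra.
Qed.

Lemma gfun_decr y1 y2 : gfun_mode <= y1 -> y1 <= y2 -> gfun y2 <= gfun y1.
Proof.
  intros H1 H12; pose proof gfun_mode_nonneg; apply pow_mul_exp_opp_decr.
  - rewrite <- gfun_mode_pow; apply pow_incr; lra.
  - apply pow_incr; lra.
Qed.

Lemma gfun_bounds y : 0 <= y -> 0 <= gfun y <= gfun_max.
Proof. intros Hy; split; [apply gfun_nonneg|apply gfun_le_max]; auto. Qed.

Lemma riemann_sum_gfun_approx h : 0 < h -> Rabs (riemann_sum gfun h - gfun_integral) <= 2 * h * gfun_max.
Proof.
  exact (riemann_sum_approx gfun gfun_max gfun_mode gfun_integral gfun_continuous gfun_bounds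
           gfun_mode_nonneg gfun_incr gfun_decr RInt_le_gfun_integral gfun_integral_approx h).
Qed.

Definition riemann_sum_gfun_bound : R :=
  gfun_integral + 2 * gfun_mode * gfun_max + 2 * gfun_max * exp (1 / 2).

(* Near [0] the error bound [2 h gfun_max] suffices; beyond the mode,
   [h gfun(h)] is bounded by [mul_gfun_le]. *)
Lemma riemann_sum_gfun_bounds h : 0 < h -> 0 <= riemann_sum gfun h <= riemann_sum_gfun_bound.
Proof.
  intros Hh; pose proof gfun_mode_nonneg; pose proof gfun_max_nonneg.
  pose proof (exp_pos (1 / 2)); pose proof gfun_integral_pos.
  split.
  - exact (riemann_sum_nonneg gfun gfun_max gfun_mode gfun_integral gfun_continuous gfun_bounds
             gfun_mode_nonneg gfun_incr gfun_decr RInt_le_gfun_integral h Hh).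
  - unfold riemann_sum_gfun_bound; destruct (Rle_or_lt h gfun_mode) as [Hmode|Hpast].
    + pose proof (riemann_sum_gfun_approx h Hh) as Happ; apply Rabs_le_between' in Happ.
      assert (2 * h * gfun_max <= 2 * gfun_mode * gfun_max) by nra; nra.
    + assert (riemann_sum gfun h <= gfun_integral + h * gfun h).
      { apply (riemann_sum_le_past_mode gfun gfun_max gfun_mode gfun_integral gfun_continuous gfun_bounds
                 gfun_decr RInt_le_gfun_integral h Hh); lra. }
      pose proof (mul_gfun_le h ltac:(lra)); nra.
Qed.

End Integrand.

Lemma Rpower_pos a x : 0 < Rpower a x.
Proof. apply exp_pos. Qed.

Lemma Rpower_inv_INR_pow p a : (1 <= p)%nat -> 0 < a -> Rpower a (/ INR p) ^ p = a.
Proof.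
  intros Hp Ha; assert (0 < INR p) by (apply lt_0_INR; lia).
  rewrite <- Rpower_pow by apply Rpower_pos.
  rewrite Rpower_mult, Rinv_l by lra; apply Rpower_1; auto.
Qed.

Lemma Rpower_inv_INR_lt p a d : (1 <= p)%nat -> 0 < a -> 0 <= d -> a < d ^ p ->
  Rpower a (/ INR p) < d.
Proof.
  intros Hp Ha Hd Had; apply Rnot_le_lt; intros Hc.
  assert (d ^ p <= Rpower a (/ INR p) ^ p) by (apply pow_incr; lra).
  rewrite Rpower_inv_INR_pow in *; auto; lra.
Qed.

Lemma Rpower_inv_INR_gt p b d : (1 <= p)%nat -> 0 < b -> d ^ p < b ->
  d < Rpower b (/ INR p).
Proof.
  intros Hp Hb Hdb; apply Rnot_le_lt; intros Hc.
  assert (Rpower b (/ INR p) ^ p <= d ^ p) by (apply pow_incr; pose proof (Rpower_pos b (/ INR p)); lra).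
  rewrite Rpower_inv_INR_pow in *; auto; lra.
Qed.

Definition Gamma_integrand (x t : R) : R := Rpower t (x - 1) * exp (- t).

Lemma Gamma_integrand_continuous x t : 0 < t -> continuous (Gamma_integrand x) t.
Proof.
  intros Ht; apply (@ex_derive_continuous R_AbsRing R_NormedModule).
  unfold Gamma_integrand, Rpower; auto_derive; auto.
Qed.

Section GammaAsIntegral.

Variables p m : nat.
Hypothesis p_pos : (1 <= p)%nat.

Let x := INR m + / INR p.

Lemma Gamma_integrand_pow y :
  0 < y -> y ^ pred p * Gamma_integrand x (y ^ p) = gfun p m y.
Proof.
  intros Hy; unfold Gamma_integrand, gfun; assert (0 < INR p) by (apply lt_0_INR; lia).
  rewrite <- (Rpower_pow (pred p)), <- pow_mult, <- (Rpower_pow (p * m)) by auto.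
  unfold Rpower; rewrite ln_pow by auto.
  rewrite <- Rmult_assoc, <- exp_plus; do 2 f_equal.
  assert (Hpred : INR (pred p) = INR p - 1) by (destruct p; [lia|simpl pred; rewrite S_INR; ring]).
  rewrite Hpred, mult_INR; unfold x; field; lra.
Qed.

(* The substitution [t = y^p]. *)
Lemma RInt_Gamma_integrand_pow a b : 0 < a -> 0 < b ->
  RInt (Gamma_integrand x) (a ^ p) (b ^ p)
  = INR p * (RInt (gfun p m) 0 b - RInt (gfun p m) 0 a).
Proof.
  intros Ha Hb.
  assert (Hpos : forall y, Rmin a b <= y <= Rmax a b -> 0 < y).
  { intros y [Hy _]; assert (0 < Rmin a b) by (apply Rmin_glb_lt; auto); lra. }
  assert (HI := is_RInt_comp (Gamma_integrand x) (fun y => y ^ p) (fun y => INR p * y ^ pred p) a b).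
  specialize (HI ltac:(intros y Hy; apply Gamma_integrand_continuous, pow_lt, Hpos; auto)).
  specialize (HI ltac:(intros y Hy; split; [auto_derive; auto; ring|
     apply (@ex_derive_continuous R_AbsRing R_NormedModule); auto_derive; auto])).
  apply (@is_RInt_unique R_CompleteNormedModule) in HI; rewrite <- HI.
  rewrite (RInt_ext _ (fun y => scal (INR p) (gfun p m y))).
  - rewrite (RInt_scal (V := R_CompleteNormedModule)) by apply ex_RInt_gfun.
    rewrite <- (RInt_Chasles (gfun p m) 0 a b) by apply ex_RInt_gfun.
    unfold scal, plus; simpl; unfold mult; simpl; ring.
  - intros y Hy; unfold scal; simpl; unfold mult; simpl.
    rewrite <- Gamma_integrand_pow by (apply Hpos; lra); ring.
Qed.

Lemma RInt_gfun_le_linear a : 0 <= a -> RInt (gfun p m) 0 a <= a * gfun_max m.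
Proof.
  intros Ha; replace (a * gfun_max m) with (RInt (fun _ => gfun_max m) 0 a)
    by (rewrite RInt_const; unfold scal; simpl; unfold mult; simpl; ring).
  apply RInt_le; auto; [apply ex_RInt_gfun|apply ex_RInt_const|].
  intros; apply gfun_le_max; lra.
Qed.

Lemma RInt_Gamma_integrand_dev a b : 0 < a -> 0 < b ->
  Rabs (RInt (Gamma_integrand x) a b - INR p * gfun_integral p m)
  <= INR p * (Rpower a (/ INR p) * gfun_max m
              + (gfun_integral p m - RInt (gfun p m) 0 (Rpower b (/ INR p)))).
Proof.
  intros Ha Hb; assert (Hp : 0 < INR p) by (apply lt_0_INR; lia).
  set (al := Rpower a (/ INR p)); set (be := Rpower b (/ INR p)).
  assert (Hal : 0 < al) by apply Rpower_pos; assert (Hbe : 0 < be) by apply Rpower_pos.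
  replace (RInt (Gamma_integrand x) a b) with (RInt (Gamma_integrand x) (al ^ p) (be ^ p))
    by (unfold al, be; rewrite !Rpower_inv_INR_pow; auto).
  rewrite RInt_Gamma_integrand_pow by auto.
  assert (RInt (gfun p m) 0 be <= gfun_integral p m) by (apply RInt_le_gfun_integral; auto; lra).
  assert (0 <= RInt (gfun p m) 0 al)
    by (apply RInt_ge_0; [lra|apply ex_RInt_gfun|intros; apply gfun_nonneg; lra]).
  assert (RInt (gfun p m) 0 al <= al * gfun_max m) by (apply RInt_gfun_le_linear; lra).
  apply Rabs_le; split; nra.
Qed.

Lemma Gamma_eq : Gamma x = INR p * gfun_integral p m.
Proof.
  assert (Hp : 0 < INR p) by (apply lt_0_INR; lia).
  pose proof (gfun_max_nonneg m) as HK.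
  apply is_RInt_gen_unique, filterlimi_locally; intros eps.
  set (e2 := eps / (2 * INR p)).
  assert (He2 : 0 < e2) by (apply Rdiv_lt_0_compat; [apply cond_pos|lra]).
  destruct (gfun_integral_approx p m p_pos e2 He2) as [B0 HB0].
  set (B := Rmax B0 1); set (del := e2 / (gfun_max m + 1)).
  assert (Hdel : 0 < del) by (apply Rdiv_lt_0_compat; lra).
  apply (Filter_prod _ _ _ (fun a => 0 < a < del ^ p) (fun b => B ^ p < b)).
  - exists (mkposreal _ (pow_lt _ p Hdel)); intros y Hy Hy0.
    change (Rabs (y - 0) < del ^ p) in Hy; apply Rabs_lt_between in Hy; lra.
  - exists (B ^ p); auto.
  - intros a b [Ha Hadel] HbB; simpl.
    assert (HB1 : 1 <= B) by apply Rmax_r.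
    assert (Hb : 0 < b) by (pose proof (pow_le B p ltac:(lra)); lra).
    exists (RInt (Gamma_integrand x) a b); split.
    { apply (@RInt_correct R_CompleteNormedModule), (@ex_RInt_continuous R_CompleteNormedModule).
      intros z Hz; apply Gamma_integrand_continuous.
      assert (0 < Rmin a b) by (apply Rmin_glb_lt; auto); lra. }
    assert (Hal : Rpower a (/ INR p) < del) by (apply Rpower_inv_INR_lt; auto; lra).
    assert (Hbe : gfun_integral p m - e2 <= RInt (gfun p m) 0 (Rpower b (/ INR p))).
    { apply HB0; pose proof (Rpower_inv_INR_gt p b B p_pos Hb HbB).
      assert (B0 <= B) by apply Rmax_l; lra. }
    assert (Rpower a (/ INR p) * gfun_max m < e2).
    { unfold del in Hal; apply (Rmult_lt_compat_r (gfun_max m + 1)) in Hal; [|lra].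
      unfold Rdiv in Hal; rewrite Rmult_assoc, Rinv_l in Hal by lra; nra. }
    pose proof (RInt_Gamma_integrand_dev a b Ha Hb).
    assert (INR p * e2 = eps / 2) by (unfold e2; field; lra).
    change (Rabs (RInt (Gamma_integrand x) a b - INR p * gfun_integral p m) < eps); nra.
Qed.

End GammaAsIntegral.

Lemma zeta_pos a : 0 < a -> 0 < zeta (1 + a).
Proof.
  intros Ha; assert (Hterm : forall k, 0 < / Rpower (INR (S k)) (1 + a))
    by (intros; apply Rinv_0_lt_compat, Rpower_pos).
  apply Rlt_le_trans with (/ Rpower (INR 1) (1 + a)); [apply Hterm|].
  apply (Series_ge_term (fun k => / Rpower (INR (S k)) (1 + a)) 0);
    [intros; left; apply Hterm|apply ex_series_inv_Rpower; auto].
Qed.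

Definition mesh (p k : nat) (s : R) : R := Rpower (INR (S k) * s) (/ INR p).

Lemma mesh_pow p k s : (1 <= p)%nat -> 0 < s -> mesh p k s ^ p = INR (S k) * s.
Proof. intros Hp Hs; apply Rpower_inv_INR_pow; auto; pose proof (INR_S_pos k); nra. Qed.

Lemma scaled_double_term_eq p m s j k : (1 <= p)%nat -> 0 < s ->
  Rpower s (INR m + / INR p) * ((INR (S j) ^ p) ^ m * polyexp_term m (INR (S j) ^ p * - s) k)
  = / Rpower (INR (S k)) (1 + / INR p) * (mesh p k s * gfun p m (INR (S j) * mesh p k s)).
Proof.
  intros Hp Hs; pose proof (INR_S_pos k); pose proof (INR_S_pos j).
  assert (0 < INR p) by (apply lt_0_INR; lia).
  unfold gfun, polyexp_term; rewrite Rpow_mult_distr, mesh_pow by auto.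
  replace (INR (S k) * (INR (S j) ^ p * - s)) with (- (INR (S j) ^ p * (INR (S k) * s))) by ring.
  unfold mesh; rewrite <- Rpower_mult_distr by lra.
  rewrite !Rpower_plus, Rpower_pow, Rpower_1 by lra.
  pose proof (Rpower_pos (INR (S k)) (/ INR p)); pose proof (Rpower_pos s (/ INR p)).
  assert (0 < s ^ m) by (apply pow_lt; auto).
  rewrite !Rpow_mult_distr; field; repeat split; lra.
Qed.

Lemma Rpower_mul_Fp_deriv_opp p m s : (1 <= p)%nat -> 0 < s ->
  Rpower s (INR m + / INR p) * Fp_deriv p m (- s)
  = Series (fun k => / Rpower (INR (S k)) (1 + / INR p) * riemann_sum (gfun p m) (mesh p k s)).
Proof.
  intros Hp Hs.
  set (u := fun j k => (INR (S j) ^ p) ^ m * polyexp_term m (INR (S j) ^ p * - s) k).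
  assert (Hneg : forall j, INR (S j) ^ p * - s < 0) by (intros j; pose proof (INR_S_pow_pos p j); nra).
  assert (Hrow : forall j, Series (u j) = Fp_deriv_term p m (- s) j)
    by (intros j; unfold u, Fp_deriv_term, polyexp; apply Series_scal_l).
  assert (Hswap : Fp_deriv p m (- s) = Series (fun k => Series (fun j => u j k))).
  { unfold Fp_deriv; rewrite Series_swap_nonneg.
    - apply Series_ext; intros j; rewrite Hrow; reflexivity.
    - intros j k; pose proof (INR_S_pow_pos p j).
      apply Rmult_le_pos; [apply pow_le; lra|apply polyexp_term_nonneg].
    - intros j; apply ex_series_scal_R, ex_series_polyexp; auto.
    - apply (ex_series_ext (Fp_deriv_term p m (- s))); [intros; rewrite Hrow; reflexivity|].
      apply ex_series_Fp_deriv; auto; lra. }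
  rewrite Hswap, <- Series_scal_l; apply Series_ext; intros k.
  unfold riemann_sum; rewrite <- !Series_scal_l; apply Series_ext; intros j.
  apply scaled_double_term_eq; auto.
Qed.

Lemma riemann_sum_mesh_lim p m k : (1 <= p)%nat ->
  filterlim (fun s => riemann_sum (gfun p m) (mesh p k s)) (at_right 0) (locally (gfun_integral p m)).
Proof.
  intros Hp; apply filterlim_locally; intros eps.
  pose proof (cond_pos eps); pose proof (gfun_max_nonneg m); pose proof (INR_S_pos k).
  set (del := eps / (2 * (gfun_max m + 1))).
  assert (Hdel : 0 < del) by (apply Rdiv_lt_0_compat; lra).
  assert (Hdp : 0 < del ^ p / INR (S k)) by (apply Rdiv_lt_0_compat; [apply pow_lt|]; lra).
  exists (mkposreal _ Hdp); intros s Hs Hs0.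
  change (Rabs (s - 0) < del ^ p / INR (S k)) in Hs; apply Rabs_lt_between in Hs.
  rewrite Rminus_0_r in Hs; destruct Hs as [_ Hs].
  assert (Hmesh : mesh p k s < del).
  { apply Rpower_inv_INR_lt; auto; [nra|lra|].
    apply (Rmult_lt_compat_l (INR (S k))) in Hs; [|lra].
    replace (INR (S k) * (del ^ p / INR (S k))) with (del ^ p) in Hs by (field; lra); lra. }
  pose proof (riemann_sum_gfun_approx p m Hp (mesh p k s) (Rpower_pos _ _)) as Happ.
  assert (2 * del * gfun_max m < eps).
  { unfold del; apply (Rmult_lt_reg_r (gfun_max m + 1)); [lra|].
    replace (2 * (eps / (2 * (gfun_max m + 1))) * gfun_max m * (gfun_max m + 1))
      with (eps * gfun_max m) by (field; lra).
    nra. }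
  change (Rabs (riemann_sum (gfun p m) (mesh p k s) - gfun_integral p m) < eps).
  pose proof (Rpower_pos (INR (S k) * s) (/ INR p)); fold (mesh p k s) in *; nra.
Qed.

Lemma Rpower_mul_Fp_deriv_opp_lim p m : (1 <= p)%nat ->
  filterlim (fun s => Rpower s (INR m + / INR p) * Fp_deriv p m (- s))
    (at_right 0) (locally (zeta (1 + / INR p) * gfun_integral p m)).
Proof.
  intros Hp; assert (Hinv : 0 < / INR p) by (apply Rinv_0_lt_compat, lt_0_INR; lia).
  eapply filterlim_ext_loc.
  - exists (mkposreal 1 Rlt_0_1); intros s _ Hs.
    symmetry; apply Rpower_mul_Fp_deriv_opp; auto.
  - apply (filterlim_Series_dominated _ _ _ (riemann_sum_gfun_bound p m)).
    + intros k; left; apply Rinv_0_lt_compat, Rpower_pos.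
    + apply ex_series_inv_Rpower, Hinv.
    + intros k s; pose proof (riemann_sum_gfun_bounds p m Hp (mesh p k s) (Rpower_pos _ _)).
      rewrite Rabs_pos_eq; lra.
    + intros k; apply riemann_sum_mesh_lim, Hp.
Qed.

Lemma filterlim_div_self c : c <> 0 -> filterlim (fun y => y / c) (locally c) (locally 1).
Proof.
  intros Hc; assert (Hcont : continuous (fun y => y / c) c)
    by (apply (@ex_derive_continuous R_AbsRing R_NormedModule); auto_derive; auto).
  unfold continuous in Hcont; cbv beta in Hcont; rewrite Rdiv_diag in Hcont by exact Hc.
  exact Hcont.
Qed.

Theorem proposition4p2 (p m : nat) (hp : (1 <= p)%nat) :
  filterlim
    (fun s : R =>
       Derive_n (Fp p) m (- s) /
       (/ INR p * zeta (1 + / INR p) * Gamma (INR m + / INR p)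
          * / Rpower s (INR m + / INR p)))
    (at_right 0) (locally 1).
Proof.
  assert (Hp : 0 < INR p) by (apply lt_0_INR; lia).
  set (Z := zeta (1 + / INR p)); set (I := gfun_integral p m).
  assert (HZ : 0 < Z) by (apply zeta_pos, Rinv_0_lt_compat, Hp).
  assert (HI : 0 < I) by (apply gfun_integral_pos, hp).
  pose proof (filterlim_comp _ _ _ _ _ _ _ _ (Rpower_mul_Fp_deriv_opp_lim p m hp)
                (filterlim_div_self (Z * I) ltac:(nra))) as Hlim.
  eapply filterlim_ext_loc; [|exact Hlim].
  exists (mkposreal 1 Rlt_0_1); intros s _ Hs.
  rewrite Derive_n_Fp, Gamma_eq by (auto; lra).
  pose proof (Rpower_pos s (INR m + / INR p)).
  fold Z I; field; repeat split; lra.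
Qed.
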